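(* Let $R$ be a commutative domain with unit, let $f\in R$ be nonzero and non-invertible, and let $S=R[u,v]/(uv-f)$ (with $R$ regarded as a subring of $S$). Then the groups of invertible elements satisfy $R^{\times}=S^{\times}$. In particular, the images of $u$ and $v$ in $S$ are not invertible.
   Context: For a domain $A$, $A^{\times}$ denotes its set of invertible elements. *)

From HB Require Import structures.
From mathcomp Require Import all_boot all_order all_algebra.
Set Implicit Arguments. Unset Strict Implicit. Unset Printing Implicit Defensive.
Import Order.TTheory GRing.Theory Num.Theory.
Local Open Scope ring_scope.

(* The polynomial ring R[u,v] is modelled as {poly {poly R}} = (R[u])[v]:
   the inner variable is u, the outer variable is v. *)
Definition var_u (R : idomainType) : {poly {poly R}} := ('X)%:P.
Definition var_v (R : idomainType) : {poly {poly R}} := 'X.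
Definition cstUV (R : idomainType) (r : R) : {poly {poly R}} := r%:P%:P.

Definition relUV (R : idomainType) (f : R) : {poly {poly R}} :=
  var_u R * var_v R - cstUV f.

Definition eqS (R : idomainType) (f : R) (p q : {poly {poly R}}) : Prop :=
  exists h : {poly {poly R}}, p - q = relUV f * h.

Definition unitS (R : idomainType) (f : R) (p : {poly {poly R}}) : Prop :=
  exists q : {poly {poly R}}, eqS f (p * q) 1.

From HB Require Import structures.
From mathcomp Require Import all_boot all_order all_algebra.
From mathcomp Require Import fraction ring zify.
Set Implicit Arguments. Unset Strict Implicit. Unset Printing Implicit Defensive.
Import Order.TTheory GRing.Theory Num.Theory.
Local Open Scope ring_scope.

(* Sending u to t and v to f/t embeds S into the fraction field of R[t]: the
   kernel of R[u,v] -> Frac(R[t]) is exactly (uv - f), because a polynomial in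
   the kernel has a leading v-coefficient divisible by u, which lets one lower
   its v-degree by subtracting a multiple of uv - f.  If p is a unit of S with
   inverse q, clearing denominators gives polynomials t^N p(t, f/t) and
   t^M q(t, f/t) with product t^(N+M), so both are units of R times powers of t.
   Every coefficient of t^N p(t, f/t) in degree below N is a multiple of f,
   which is not a unit; hence the exponent is exactly N and p(t, f/t) is a unit
   of R. *)

Lemma tofrac_inj (R : idomainType) : injective (@tofrac R).
Proof. by move=> x y /eqP; rewrite tofrac_eq => /eqP. Qed.

Lemma coef0_eq0_mulX (R : nzRingType) (p : {poly R}) :
  p`_0 = 0 -> exists q, p = q * 'X.
Proof.
move=> p0; have /factor_theorem[q ->] : root p 0.
  by rewrite /root horner_coef0 p0.
by exists q; rewrite subr0.
Qed.

Lemma mulp_eq_Xn (R : idomainType) k (A B : {poly R}) : A * B = 'X^k ->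
  exists c i, [/\ c \is a GRing.unit, (i <= k)%N,
                  A = c%:P * 'X^i & B = c^-1%:P * 'X^(k - i)].
Proof.
have nzX : ('X : {poly R}) != 0 by rewrite polyX_eq0.
elim: k A B => [|k IHk] A B AB.
  have uA : A \is a GRing.unit by apply/unitrP; exists B; rewrite mulrC AB.
  move: (uA); rewrite poly_unitE => /andP[/eqP sA uA0].
  have eA : A = (A`_0)%:P by apply: size1_polyC; rewrite sA.
  exists A`_0, 0%N; split; rewrite ?mulr1 //.
  by rewrite -polyCV -eA -[B]mul1r -(mulVr uA) -mulrA AB expr0 mulr1.
have : A`_0 * B`_0 = 0 by rewrite -coef0M AB coefXn.
move/eqP; rewrite mulf_eq0.
case/orP=> [/eqP/coef0_eq0_mulX[A' eA]|/eqP/coef0_eq0_mulX[B' eB]].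
  have /IHk[c [i [uc ik eA' eB]]] : A' * B = 'X^k.
    by apply: (mulIf nzX); rewrite -exprSr -AB eA mulrAC.
  by exists c, i.+1; split; rewrite ?eA ?eA' ?exprSr ?mulrA.
have /IHk[c [i [uc ik eA eB']]] : A * B' = 'X^k.
  by apply: (mulIf nzX); rewrite -exprSr -AB eB mulrA.
by exists c, i; split; rewrite ?eB ?eB' -?mulrA -?exprSr ?subSn ?leqW.
Qed.

Section EvaluationUV.

Variables (R : idomainType) (f : R).
Local Notation t := (tofrac ('X : {poly R})).

Fact evUV_comm : commr_rmorph (@tofrac {poly R}) (tofrac f%:P / t).
Proof. by move=> x; apply: mulrC. Qed.

Definition evUV : {rmorphism {poly {poly R}} -> {fraction {poly R}}} :=
  horner_morph evUV_comm.

Lemma t_neq0 : t != 0.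
Proof. by rewrite tofrac_eq0 polyX_eq0. Qed.

Lemma evUV_cst r : evUV (cstUV r) = tofrac r%:P.
Proof. exact: horner_morphC. Qed.

Lemma evUV_u : evUV (var_u R) = t.
Proof. exact: horner_morphC. Qed.

Lemma evUV_v : evUV (var_v R) = tofrac f%:P / t.
Proof. exact: horner_morphX. Qed.

Lemma evUV_relUV : evUV (relUV f) = 0.
Proof.
by rewrite rmorphB rmorphM evUV_u evUV_v evUV_cst mulrC divfK ?t_neq0 ?subrr.
Qed.

Lemma evUV_u_neq_cst r : evUV (var_u R) != tofrac r%:P.
Proof.
apply/eqP; rewrite evUV_u => /tofrac_inj eXr.
have := congr1 (fun q : {poly R} => q`_1) eXr; rewrite coefX coefC /=.
by apply/eqP; rewrite oner_neq0.
Qed.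

Definition numer_evUV N (p : {poly {poly R}}) : {poly R} :=
  \sum_(j < N.+1) p`_j * (f ^+ j)%:P * 'X^(N - j).

Lemma numer_evUVE N (p : {poly {poly R}}) :
  (size p <= N.+1)%N -> tofrac (numer_evUV N p) = t ^+ N * evUV p.
Proof.
move=> sp; rewrite /= /horner_morph.
rewrite (horner_coef_wide _ (leq_trans (size_poly _ _) sp)).
rewrite rmorph_sum mulr_sumr; apply: eq_bigr => j _.
have jN : (j <= N)%N by rewrite -ltnS.
have -> : t ^+ N = t ^+ (N - j) * t ^+ j by rewrite -exprD subnK.
rewrite coef_map !rmorphM !rmorphXn /= expr_div_n.
set tj := t ^+ j; have tj_neq0 : tj != 0 by rewrite expf_neq0 ?t_neq0.
by rewrite -[RHS]mulrA [tj * _]mulrCA [tj * _]mulrC divfK // mulrC.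
Qed.

Lemma coef0_numer_evUV N p : (numer_evUV N p)`_0 = p`_N`_0 * f ^+ N.
Proof.
rewrite coef_sum big_ord_recr /= subnn expr0 mulr1 coefMC big1 ?add0r // => j _.
by rewrite coefMXn subn_gt0 ltn_ord.
Qed.

Lemma coef_numer_evUV_dvd N p i :
  (i < N)%N -> exists d, (numer_evUV N p)`_i = f * d.
Proof.
move=> iN; exists (\sum_(j < N.+1) (p`_j * 'X^(N - j))`_i * f ^+ j.-1).
rewrite coef_sum mulr_sumr; apply: eq_bigr => -[[|j] _] _ /=.
  by rewrite expr0 mulr1 !coefMXn subn0 iN mul0r mulr0.
by rewrite mulrAC coefMC exprS mulrCA.
Qed.

Lemma size_sub_relUV N (p : {poly {poly R}}) d :
  (size p <= N.+2)%N -> p`_N.+1 = d * 'X ->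
  (size (p - relUV f * (d%:P * 'X^N))%R <= N.+1)%N.
Proof.
move=> sp top.
have -> : relUV f * (d%:P * 'X^N) =
           (d * 'X)%:P * 'X^(N.+1) - (f%:P * d)%:P * 'X^N.
  by rewrite /relUV /var_u /var_v /cstUV !polyCM exprS; ring.
apply/leq_sizeP => j jN.
rewrite !coefB !coefCM !coefXn (gtn_eqF jN) mulr0 subr0.
have [->|ne_jN] := eqVneq j N.+1; first by rewrite mulr1 top subrr.
rewrite mulr0 subr0; apply: (leq_sizeP _ _ sp).
by rewrite ltn_neqAle eq_sym ne_jN jN.
Qed.

Section Kernel.

Hypothesis f_neq0 : f != 0.

Lemma evUV_eq0 p : evUV p = 0 -> exists h, p = relUV f * h.
Proof.
have [n] := ubnP (size p); elim: n p => // n IHn p /ltnSE sp ev0.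
move: sp; case Ep: (size p) => [|[|N]] sp.
- by exists 0; apply/eqP; rewrite mulr0 -size_poly_eq0 Ep.
- exists 0; move: ev0; rewrite mulr0 [p]size1_polyC ?Ep //= horner_morphC.
  by move=> /eqP; rewrite tofrac_eq0 => /eqP ->.
have top0 : p`_N.+1`_0 = 0.
  have numer0 : numer_evUV N.+1 p = 0.
    by apply: tofrac_inj; rewrite numer_evUVE ?Ep // ev0 mulr0 rmorph0.
  move: (coef0_numer_evUV N.+1 p); rewrite numer0 coef0 => /esym/eqP.
  by rewrite mulf_eq0 expf_eq0 (negPf f_neq0) andbF orbF => /eqP.
have [d top] := coef0_eq0_mulX top0.
have [h eh] : exists h, p - relUV f * (d%:P * 'X^N) = relUV f * h.
  apply: IHn; last by rewrite rmorphB rmorphM evUV_relUV ev0 mul0r subrr.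
  by rewrite (leq_trans _ sp) // ltnS size_sub_relUV ?Ep.
by exists (h + d%:P * 'X^N); rewrite mulrDr -eh subrK.
Qed.

Lemma eqS_evUV p q : eqS f p q <-> evUV p = evUV q.
Proof.
split=> [[h e]|e]; last by apply: evUV_eq0; rewrite rmorphB e subrr.
by apply/eqP; rewrite -subr_eq0 -rmorphB e rmorphM evUV_relUV mul0r.
Qed.

Lemma unitS_evUV p : unitS f p <-> exists q, evUV p * evUV q = 1.
Proof.
by split=> -[q e]; exists q; [move/eqS_evUV: e | apply/eqS_evUV];
  rewrite rmorphM rmorph1.
Qed.

Lemma evUV_v_neq_cst r : evUV (var_v R) != tofrac r%:P.
Proof.
apply/eqP; rewrite evUV_v => e.
have fX : f%:P = r%:P * 'X.
  by apply: tofrac_inj; rewrite rmorphM /= -e divfK ?t_neq0.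
have := congr1 (fun q : {poly R} => q`_0) fX; rewrite coefC coefMX.
by apply/eqP.
Qed.

End Kernel.

Section NonUnit.

Hypothesis f_nunit : f \isn't a GRing.unit.

Lemma numer_evUV_monomial N p c i : c \is a GRing.unit ->
  numer_evUV N p = c%:P * 'X^i -> (N <= i)%N.
Proof.
move=> uc eP; rewrite leqNgt; apply/negP => /(coef_numer_evUV_dvd p)[d].
rewrite eP coefCM coefXn eqxx mulr1 => ec.
by move: uc; rewrite ec unitrM (negPf f_nunit).
Qed.

Lemma evUV_unit_cst p q : evUV p * evUV q = 1 ->
  exists2 c, c \is a GRing.unit & evUV p = tofrac c%:P.
Proof.
move=> pq; set N := size p; set M := size q.
have PQ : numer_evUV N p * numer_evUV M q = 'X^(N + M).
  apply: tofrac_inj; rewrite rmorphM /= !numer_evUVE // rmorphXn exprD.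
  by rewrite mulrACA pq mulr1.
have [c [i [uc iNM eP eQ]]] := mulp_eq_Xn PQ.
have Ni := numer_evUV_monomial uc eP.
have Mi : (M <= N + M - i)%N by apply: numer_evUV_monomial eQ; rewrite unitrV.
have iN : i = N by lia.
exists c => //; apply: (mulfI (expf_neq0 N t_neq0)).
by rewrite -numer_evUVE // eP iN rmorphM rmorphXn mulrC.
Qed.

End NonUnit.

End EvaluationUV.

Theorem lemma1p2 (R : idomainType) (f : R) (hf0 : f != 0)
    (hfu : f \isn't a GRing.unit) :
  (forall p : {poly {poly R}},
      unitS f p <-> exists2 r : R, r \is a GRing.unit & eqS f p (cstUV r))
  /\ ~ unitS f (var_u R) /\ ~ unitS f (var_v R).
Proof.
have unitS_cst p :
    unitS f p <-> exists2 r, r \is a GRing.unit & eqS f p (cstUV r).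
  rewrite unitS_evUV //; split=> [[q /(evUV_unit_cst hfu)[r ur e]]|[r ur]].
    by exists r => //; apply/eqS_evUV; rewrite ?evUV_cst.
  move/(eqS_evUV hf0) => ->; exists (cstUV r^-1).
  by rewrite !evUV_cst -rmorphM -polyCM divrr ?rmorph1.
split=> //; split=> /unitS_cst[r _ /(eqS_evUV hf0)].
  by rewrite evUV_cst; apply/eqP; apply: evUV_u_neq_cst.
by rewrite evUV_cst; apply/eqP; apply: evUV_v_neq_cst.
Qed.
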